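(* Suppose conditions (A.2) and (A.3) hold. Let $\gamma_k:=\sum_{i=0}^{k-1}\alpha_i$, let $g:(0,\infty)\to(0,\infty)$, define $\beta_k:=g(\gamma_k)$, let $T>0$ and let $\{m_k\}_k$ be the time indices associated with $T$. Assume (i) $\sum_{k=0}^\infty\alpha_k^2g(\gamma_k)^2\sigma_k^2<\infty$; (ii) there is an interval $I=[\iota,\infty)$ such that $g'(x)>0$ for all $x\in I$. Then condition (A.4) holds (with this sequence $\{\beta_k\}_k$), and for every $\delta\in(0,1)$ there is $N_\delta\in\mathbb N$ such that (a) $\delta Tk\le\gamma_{m_{n+k}}-\gamma_{m_n}\le Tk$ for all $k\in\mathbb N$ and $n\ge N_\delta$; (b) $\sum_{k=n}^\infty g(\gamma_{m_k})^{-2\vartheta}\le g(\gamma_{m_n})^{-2\vartheta}+(\delta T)^{-1}\int_{\gamma_{m_n}}^\infty g(t)^{-2\vartheta}\,\mathrm dt$ for all $\vartheta\in(0,1)$ and $n\ge N_\delta$.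
   Context: Setting: a filtered probability space $(\Omega,\mathcal F,\{\mathcal F_k\}_k,\mathbb P)$, $f:\mathbb R^d\to\mathbb R$ continuously differentiable, step sizes $\{\alpha_k\}_k\subset(0,\infty)$, and a stochastic process $\{x^k\}_k$ ($x^k$ $\mathcal F_k$-measurable) with $\mathcal F_{k+1}$-measurable stochastic gradients $g^k$ and errors $e^k=g^k-\nabla f(x^k)$ (as generated by the normal map-based stochastic proximal gradient method $z^{k+1}=z^k-\alpha_k(g^k+(z^k-\mathrm{prox}_{\lambda\varphi}(z^k))/\lambda)$, $x^{k}=\mathrm{prox}_{\lambda\varphi}(z^{k})$). Conditions: (A.2) $\mathbb E[g^k\mid\mathcal F_k]=\nabla f(x^k)$ a.s. and there is $\{\sigma_k\}_k\subseteq\mathbb R_+$ with $\mathbb E\|e^k\|^2\le\sigma_k^2$ for all $k$. (A.3) $\sum_k\alpha_k=\infty$, $\alpha_k\to0$. (A.4) There is a positive sequence $\{\beta_k\}_k$, non-decreasing for all $k$ sufficiently large, with $\sum_k\alpha_k^2\beta_k^2\sigma_k^2<\infty$. Time indices: $\tau_{k,n}=\sum_{i=k}^{n-1}\alpha_i$, $\varpi(k,T)=\max\{k+1,\sup\{n\ge k:\tau_{k,n}\le T\}\}$, $m_0=0$, $m_{k+1}=\varpi(m_k,T)$. *)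

From HB Require Import structures.
From mathcomp Require Import all_boot all_order all_algebra.
From mathcomp Require Import all_classical all_reals all_analysis.
Set Implicit Arguments. Unset Strict Implicit. Unset Printing Implicit Defensive.
Import Order.TTheory GRing.Theory Num.Theory.
Import numFieldNormedType.Exports.
Local Open Scope classical_set_scope.
Local Open Scope ring_scope.

Definition gammaseq {R : realType} (alpha : nat -> R) (k : nat) : R :=
  \sum_(0 <= i < k) alpha i.

Definition tau {R : realType} (alpha : nat -> R) (k n : nat) : R :=
  \sum_(k <= i < n) alpha i.

(* supremum of a set of naturals: its maximum when it has one
   (i.e. when it is nonempty and bounded); 0 otherwise (never used below,
   since the relevant sets are nonempty and bounded under (A.3)). *)
Definition natsup (A : set nat) : nat :=
  match pselect (exists m, A m /\ forall n, A n -> (n <= m)%N) with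
  | left H => projT1 (cid H)
  | right _ => 0%N
  end.

Definition varpi {R : realType} (alpha : nat -> R) (k : nat) (T : R) : nat :=
  maxn k.+1 (natsup [set n | (k <= n)%N /\ tau alpha k n <= T]).

Fixpoint mseq {R : realType} (alpha : nat -> R) (T : R) (k : nat) : nat :=
  match k with
  | 0 => 0%N
  | k'.+1 => varpi alpha (mseq alpha T k') T
  end.

From HB Require Import structures.
From mathcomp Require Import all_boot all_order all_algebra.
From mathcomp Require Import all_classical all_reals all_analysis.
From mathcomp Require Import measurable_realfun.
From mathcomp Require Import zify lra.
Set Implicit Arguments. Unset Strict Implicit. Unset Printing Implicit Defensive.
Import Order.TTheory GRing.Theory Num.Theory.
Import numFieldNormedType.Exports.
Local Open Scope classical_set_scope.
Local Open Scope ring_scope.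

(* Since alpha_k -> 0, eventually every step alpha_j is at most (1 - delta) T.
   The time index m_{n+1} = varpi(m_n, T) is the last index at which gamma has
   advanced by at most T from gamma_{m_n}, and one more step would exceed T;
   hence each jump gamma_{m_{n+1}} - gamma_{m_n} lies in [delta T, T], and
   summing these bounds gives (a).  Beyond iota the function g^(-2 theta) is
   nonincreasing, so the term at gamma_{m_{k+1}} is at most (delta T)^-1 times
   its integral over [gamma_{m_k}, gamma_{m_{k+1}}[, an interval of length at
   least delta T; these intervals are disjoint, which gives (b).  (A.4) holds
   because gamma increases to +oo and g increases beyond iota. *)

Section Gammaseq.
Variables (R : realType) (alpha : nat -> R).

Lemma gammaseq0 : gammaseq alpha 0 = 0.
Proof. by rewrite /gammaseq big_geq. Qed.

Lemma gammaseqS k : gammaseq alpha k.+1 = gammaseq alpha k + alpha k.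
Proof. by rewrite /gammaseq big_nat_recr. Qed.

Lemma tau_gammaseq k n : (k <= n)%N ->
  tau alpha k n = gammaseq alpha n - gammaseq alpha k.
Proof.
move=> kn; rewrite /gammaseq /tau (@big_cat_nat _ _ _ k 0 n) //=.
by rewrite addrC addrK.
Qed.

Hypothesis alpha_gt0 : forall k, 0 < alpha k.

Lemma gammaseq_lt : {homo gammaseq alpha : i j / (i < j)%N >-> i < j}.
Proof. by apply: homo_ltn lt_trans _ => k; rewrite gammaseqS ltrDl. Qed.

Lemma gammaseq_le : {homo gammaseq alpha : i j / (i <= j)%N >-> i <= j}.
Proof. by apply: homo_leq le_refl le_trans _ => k; rewrite ltW ?gammaseq_lt. Qed.

Lemma gammaseq_gt0 k : (0 < k)%N -> 0 < gammaseq alpha k.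
Proof. by move/gammaseq_lt; rewrite gammaseq0. Qed.

Hypothesis series_alpha_div : series alpha @ \oo --> +oo.

Lemma gammaseq_unbounded M : exists N, M < gammaseq alpha N.
Proof.
have [N _ HN] := (cvgryPgt _).1 series_alpha_div M.
by exists N; exact: (HN N (leqnn N)).
Qed.

Lemma gammaseq_eventually_ge M : exists K, forall k, (K <= k)%N -> M <= gammaseq alpha k.
Proof.
have [K M_lt] := gammaseq_unbounded M.
by exists K => k Kk; apply/ltW/(lt_le_trans M_lt)/gammaseq_le.
Qed.

End Gammaseq.

Lemma natsupP (A : set nat) : (exists n, A n) -> (exists M, forall n, A n -> (n <= M)%N) ->
  A (natsup A) /\ forall n, A n -> (n <= natsup A)%N.
Proof.
move=> [n0 An0] [M AleM].
have exA : exists n, `[< A n >] by exists n0; apply/asboolP.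
have ubA n : `[< A n >] -> (n <= M)%N by move/asboolP; exact: AleM.
have [s /asboolP As smax] := ex_maxnP exA ubA.
have maxA : exists m, A m /\ forall n, A n -> (n <= m)%N.
  by exists s; split => // n /asboolP; exact: smax.
by rewrite /natsup; case: pselect => // H; exact: (projT2 (cid H)).
Qed.

Section Varpi.
Variables (R : realType) (alpha : nat -> R).
Hypothesis alpha_gt0 : forall k, 0 < alpha k.
Hypothesis series_alpha_div : series alpha @ \oo --> +oo.

Lemma varpi_gap k T eps : eps <= T -> (forall j, (k <= j)%N -> alpha j <= eps) ->
  T - eps <= gammaseq alpha (varpi alpha k T) - gammaseq alpha k <= T.
Proof.
move=> epsT alpha_le.
set S := [set n | (k <= n)%N /\ tau alpha k n <= T].
have SkS : S k.+1.
  split => //; rewrite tau_gammaseq // gammaseqS.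
  by have := alpha_le k (leqnn k); lra.
have S_bounded : exists M, forall n, S n -> (n <= M)%N.
  have [M HM] := gammaseq_unbounded series_alpha_div (gammaseq alpha k + T).
  exists M => n [kn]; rewrite tau_gammaseq // leqNgt => Tn; apply/negP.
  by move/(gammaseq_lt alpha_gt0); lra.
have [[ks Ss] smax] := natsupP (ex_intro _ _ SkS) S_bounded.
have -> : varpi alpha k T = natsup S by apply/maxn_idPr; exact: smax.
move: Ss; rewrite tau_gammaseq // => Ss.
have : T < tau alpha k (natsup S).+1.
  by rewrite ltNge; apply/negP => tauT; have := smax _ (conj (leqW ks) tauT); rewrite ltnn.
rewrite tau_gammaseq ?(leqW ks) // gammaseqS => lt_Ss.
by have := alpha_le _ ks; rewrite Ss andbT; lra.
Qed.

Lemma mseq_ge T n : (n <= mseq alpha T n)%N.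
Proof. by elim: n => //= n IH; rewrite /varpi leq_max ltnS IH. Qed.

Lemma mseq_gap T lo N : 0 <= lo -> (forall j, (N <= j)%N -> alpha j <= T - lo) ->
  forall k, (N <= k)%N ->
  lo <= gammaseq alpha (mseq alpha T k.+1) - gammaseq alpha (mseq alpha T k) <= T.
Proof.
move=> lo_ge0 alpha_le k Nk.
have epsT : T - lo <= T by rewrite gerBl.
have alpha_le' j : (mseq alpha T k <= j)%N -> alpha j <= T - lo.
  by move=> kj; apply/alpha_le/(leq_trans Nk)/(leq_trans (mseq_ge T k)).
by have := varpi_gap epsT alpha_le'; rewrite opprB addrCA subrr addr0.
Qed.

End Varpi.

Lemma increments_sum_bounds (R : realDomainType) (u : nat -> R) (n : nat) (lo hi : R) :
  (forall k, (n <= k)%N -> lo <= u k.+1 - u k <= hi) ->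
  forall k, lo * k%:R <= u (n + k)%N - u n <= hi * k%:R.
Proof.
move=> step; elim=> [|k IH]; first by rewrite addn0 subrr !mulr0 lexx.
have /andP[lo_step step_hi] := step _ (leq_addr k n).
move: IH; rewrite addnS -natr1 !mulrDr !mulr1 => /andP[lo_k k_hi].
by apply/andP; split; lra.
Qed.

Lemma derive1_gt0_le (R : realType) (g : R -> R) (iota : R) :
  (forall x, iota <= x -> derivable g x 1 /\ 0 < derive1 g x) ->
  forall x y, iota <= x -> x <= y -> g x <= g y.
Proof.
move=> dg x y ix xy.
have dg_xy z : z \in `[x, y] -> derivable g z 1 /\ 0 < derive1 g z.
  by rewrite in_itv /= => /andP[xz _]; apply: dg; lra.
apply: (@ger0_derive1_le_cc _ g x y) => //; rewrite ?in_itv /= ?lexx ?xy //.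
- by move=> z /subset_itv_oo_cc/dg_xy[].
- by move=> z /subset_itv_oo_cc/dg_xy[_ /ltW].
- by apply: derivable_within_continuous => z /dg_xy[].
Qed.

Section SeriesIntegralComparison.
Variables (R : realType) (h : R -> R) (iota : R).
Hypothesis h_ge0 : forall x, 0 <= h x.
Hypothesis h_noninc : forall x y, iota <= x -> x <= y -> h y <= h x.

Lemma measurable_fun_noninc (D : set R) : measurable D -> D `<=` `[iota, +oo[ ->
  measurable_fun D (EFin \o h).
Proof.
move=> mD Diota; apply/measurable_EFinP.
apply: (@eq_measurable_fun _ _ _ _ D (fun t => h (Num.max t iota))).
  move=> t; rewrite inE => /Diota; rewrite /= in_itv /= andbT => it.
  by rewrite max_l.
apply: nonincreasing_measurable => // x y xy.
by apply: h_noninc; [rewrite le_max lexx orbT|exact: le_max2].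
Qed.

Local Open Scope ereal_scope.

Lemma integral_itv_ge c b : (iota <= c)%R -> (c < b)%R ->
  ((b - c) * h b)%:E <= \int[lebesgue_measure]_(t in `[c, b[) (h t)%:E.
Proof.
move=> ic cb.
have -> : ((b - c) * h b)%:E = \int[lebesgue_measure]_(t in `[c, b[) (h b)%:E.
  by rewrite integral_cst //= lebesgue_measure_itv /= lte_fin cb -EFinD -EFinM mulrC.
apply: ge0_le_integral => //.
- by move=> t _; rewrite lee_fin.
- apply: (measurable_fun_noninc (D := `[c, b[)) => // t /=.
  by rewrite !in_itv /= andbT => /andP[ct _]; apply: le_trans ct.
- by move=> t /=; rewrite in_itv /= lee_fin => /andP[ct tb]; apply: h_noninc;
    [exact: le_trans ct|exact: ltW].
Qed.

Lemma integral_itv_split a b c : (iota <= a)%R -> (a <= b)%R -> (b <= c)%R ->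
  \int[lebesgue_measure]_(t in `[a, c[) (h t)%:E =
  \int[lebesgue_measure]_(t in `[a, b[) (h t)%:E +
  \int[lebesgue_measure]_(t in `[b, c[) (h t)%:E.
Proof.
move=> ia ab bc.
have abc := @itv_bndbnd_setU _ _ (BLeft a) (BLeft b) (BLeft c).
rewrite abc ?bnd_simp //; apply: integral_setU => //.
- rewrite -abc ?bnd_simp //; apply: (measurable_fun_noninc (D := `[a, c[)) => // t /=.
  by rewrite !in_itv /= andbT => /andP[ax _]; apply: le_trans ax.
- rewrite disj_set2E; apply/eqP/seteqP; split => t //=.
  by rewrite !in_itv /= => -[/andP[_ tb] /andP[bt _]]; have := lt_le_trans tb bt;
    rewrite ltxx.
Qed.

Lemma integral_itv_le_infty a b : (iota <= a)%R ->
  \int[lebesgue_measure]_(t in `[a, b[) (h t)%:E <=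
  \int[lebesgue_measure]_(t in `[a, +oo[) (h t)%:E.
Proof.
move=> ia; apply: ge0_subset_integral => //.
- apply: (measurable_fun_noninc (D := `[a, +oo[)) => // t /=.
  by rewrite !in_itv /= !andbT => ax; apply: le_trans ax.
- by move=> t _; rewrite lee_fin.
- by move=> t /=; rewrite !in_itv /= andbT => /andP[-> _].
Qed.

Variables (a : nat -> R) (n : nat) (e : R).
Hypothesis e_gt0 : (0 < e)%R.
Hypothesis a_ge_iota : forall k, (n <= k)%N -> (iota <= a k)%R.
Hypothesis a_gap : forall k, (n <= k)%N -> (e <= a k.+1 - a k)%R.

Lemma gap_seq_ge_head N : (a n <= a (n + N)%N)%R.
Proof.
elim: N => [|N IH]; first by rewrite addn0.
rewrite addnS; have := a_gap (leq_addr N n); have := e_gt0; lra.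
Qed.

Lemma term_le_integral k : (n <= k)%N ->
  (h (a k.+1))%:E <= (e^-1)%:E * \int[lebesgue_measure]_(t in `[a k, a k.+1[) (h t)%:E.
Proof.
move=> nk; have gap := a_gap nk.
have ak_lt : (a k < a k.+1)%R by have := e_gt0; lra.
apply: le_trans (lee_wpmul2l _ (integral_itv_ge (a_ge_iota nk) ak_lt)); last first.
  by rewrite lee_fin invr_ge0 ltW.
by rewrite -EFinM lee_fin ler_pdivlMl // ler_wpM2r.
Qed.

Lemma partial_sum_le_integral N :
  \sum_(n <= k < n + N.+1) (h (a k))%:E <=
  (h (a n))%:E + (e^-1)%:E * \int[lebesgue_measure]_(t in `[a n, a (n + N)%N[) (h t)%:E.
Proof.
have int_ge0 c b : 0 <= \int[lebesgue_measure]_(t in `[c, b[) (h t)%:E.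
  by apply: integral_ge0 => t _; rewrite lee_fin.
have einv_ge0 : 0 <= (e^-1)%:E by rewrite lee_fin invr_ge0 ltW.
elim: N => [|N IH].
  by rewrite addn1 big_nat1 leeDl // mule_ge0.
rewrite addnS big_nat_recr ?leq_addr //= addnS.
rewrite (integral_itv_split _ (gap_seq_ge_head N)) ?a_ge_iota //; last first.
  by have := a_gap (leq_addr N n); have := e_gt0; lra.
rewrite ge0_muleDr // addeA; rewrite addnS in IH.
by apply: leeD IH _; exact: term_le_integral (leq_addr N n).
Qed.

Lemma nneseries_le_integral :
  \sum_(n <= k <oo) (h (a k))%:E <=
  (h (a n))%:E + (e^-1)%:E * \int[lebesgue_measure]_(t in `[a n, +oo[) (h t)%:E.
Proof.
apply: lime_le; first by apply: is_cvg_nneseries => k _ _; rewrite lee_fin.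
exists n.+1 => // N /= nN.
have -> : N = (n + (N - n.+1).+1)%N by lia.
apply: le_trans (partial_sum_le_integral _) _.
apply/leeD2l/lee_wpmul2l; first by rewrite lee_fin invr_ge0 ltW.
exact/integral_itv_le_infty/a_ge_iota.
Qed.

End SeriesIntegralComparison.

Lemma powRN_le (R : realType) (x y p : R) : 0 < x -> x <= y -> 0 <= p ->
  y `^ (- p) <= x `^ (- p).
Proof.
move=> x_gt0 xy p_ge0; have y_gt0 := lt_le_trans x_gt0 xy.
rewrite !powRN lef_pV2 ?posrE ?powR_gt0 //.
by rewrite ge0_ler_powR // nnegrE ltW.
Qed.

Theorem lemma3p8 (R : realType) (alpha sigma : nat -> R) (g : R -> R) (T : R)
  (* (A.2), deterministic part: sigma_k >= 0 *)
  (Hsigma : forall k, 0 <= sigma k)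
  (* step sizes are positive *)
  (Halpha : forall k, 0 < alpha k)
  (* (A.3) *)
  (Hdiv : series alpha @ \oo --> +oo)
  (Hto0 : alpha @ \oo --> 0)
  (* g : (0,oo) -> (0,oo) *)
  (Hgpos : forall x, 0 < x -> 0 < g x)
  (HT : 0 < T)
  (* (i) *)
  (Hi : cvg (series (fun k => alpha k ^+ 2 * g (gammaseq alpha k) ^+ 2 * sigma k ^+ 2) @ \oo))
  (* (ii) *)
  (Hii : exists iota : R, 0 < iota /\
           forall x, iota <= x -> derivable g x 1 /\ 0 < derive1 g x) :
  let beta := fun k => g (gammaseq alpha k) in
  let m := mseq alpha T in
  (* (A.4) for beta *)
  ((forall k, (0 < k)%N -> 0 < beta k) /\
   (exists K, forall k, (K <= k)%N -> beta k <= beta k.+1) /\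
   cvg (series (fun k => alpha k ^+ 2 * beta k ^+ 2 * sigma k ^+ 2) @ \oo)) /\
  (forall delta : R, 0 < delta < 1 ->
    exists Nd : nat,
      (forall k n, (Nd <= n)%N ->
         delta * T * k%:R <= gammaseq alpha (m (n + k)%N) - gammaseq alpha (m n)
         <= T * k%:R) /\
      (forall (theta : R) n, 0 < theta < 1 -> (Nd <= n)%N ->
         (\sum_(n <= k <oo) ((g (gammaseq alpha (m k))) `^ (- (2 * theta)))%:E <=
          ((g (gammaseq alpha (m n))) `^ (- (2 * theta)))%:E +
          ((delta * T)^-1)%:E *
          \int[lebesgue_measure]_(t in `[gammaseq alpha (m n), +oo[%classic)
              ((g t) `^ (- (2 * theta)))%:E)%E)).
Proof.
move=> beta m; have [iota [iota_gt0 dg]] := Hii.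
have [K gammaseq_ge_iota] := gammaseq_eventually_ge Halpha Hdiv iota.
split.
  split; first by move=> k /(gammaseq_gt0 Halpha)/Hgpos.
  split=> //; exists K => k Kk.
  by apply: (derive1_gt0_le dg); [exact: gammaseq_ge_iota|exact/gammaseq_le/leqnSn].
move=> delta /andP[delta_gt0 delta_lt1]; have dT_gt0 := mulr_gt0 delta_gt0 HT.
have /cvgrPdist_le/(_ (T - delta * T)) [|N _ alpha_small] := Hto0.
  by rewrite subr_gt0 gtr_pMl.
have step k : (maxn N K <= k)%N ->
    delta * T <= gammaseq alpha (m k.+1) - gammaseq alpha (m k) <= T.
  move=> /(leq_trans (leq_maxl N K)) Nk.
  apply: (mseq_gap Halpha Hdiv (ltW dT_gt0) _ Nk) => j /alpha_small.
  by rewrite sub0r normrN gtr0_norm.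
exists (maxn N K); split=> [k n Nn|theta n /andP[theta_gt0 _] Nn].
  apply: (increments_sum_bounds (u := fun j => gammaseq alpha (m j))) => j nj.
  exact: step (leq_trans Nn nj).
apply: (@nneseries_le_integral _ (fun t => g t `^ (- (2 * theta))) iota _ _
         (fun k => gammaseq alpha (m k)) n (delta * T) dT_gt0).
- by move=> t; exact: powR_ge0.
- move=> x y ix xy; apply: powRN_le; last by rewrite mulr_ge0 // ltW.
    by apply: Hgpos; lra.
  exact: (derive1_gt0_le dg) ix xy.
- move=> k nk; apply/gammaseq_ge_iota/(leq_trans _ (mseq_ge alpha T k)).
  by rewrite (leq_trans (leq_maxr N K)) ?(leq_trans Nn).
- by move=> k /(leq_trans Nn)/step/andP[].
Qed.
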